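(* Let $U$ and $V$ be finite-dimensional vector spaces over a field $\mathbb{K}$, and let $\mathcal{S}$ be a linear subspace of $\mathcal{L}(U,V)$ with $\operatorname{codim}_{\mathcal{L}(U,V)}\mathcal{S}\leq \dim V-2$. Then every range-compatible group homomorphism $F:(\mathcal{S},+)\to(V,+)$ is local, i.e. there exists $x\in U$ such that $F(s)=s(x)$ for all $s\in\mathcal{S}$.
   Context: $\mathcal{L}(U,V)$ is the space of linear maps from $U$ to $V$. For a subset $\mathcal{S}$ of $\mathcal{L}(U,V)$, a map $F:\mathcal{S}\to V$ is range-compatible when $F(s)\in\operatorname{im}s$ for all $s\in\mathcal{S}$; it is local when there exists $x\in U$ with $F(s)=s(x)$ for all $s\in\mathcal{S}$. *)

From HB Require Import structures.
From mathcomp Require Export all_boot all_order all_algebra.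
Set Implicit Arguments. Unset Strict Implicit. Unset Printing Implicit Defensive.
Export GRing.Theory.
Local Open Scope ring_scope.

Definition codimv (K : fieldType) (W : vectType K) (S : {vspace W}) : nat :=
  (\dim (fullv : {vspace W}) - \dim S)%N.

(* We prove F s = s x for a fixed x by
   induction on dim V (the hypothesis forces dim V >= 2).
   - If S = L(U,V): for each coordinate form e_i on U, the additive map
     y |-> F (u |-> e_i(u) y) sends each y into the line <[y]>, hence is a
     homothety of ratio c_i; expanding s = sum_i (u |-> e_i(u) s(e_i))
     gives F s = s (sum_i c_i e_i).
   - Otherwise S misses two rank-one operators whose ranges are
     non-collinear lines <[y1]>, <[y2]>.
   - For such a line <[y]> and a quotient map p : V -> V/<[y]>, the image of
     S under s |-> p \o s has smaller codimension, F descends to it, and the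
     induction hypothesis yields x with F s - s x \in <[y]> on S.
   - The points x1, x2 obtained for <[y1]> and <[y2]> coincide (otherwise
     the codimension bound puts into S an operator of range <[y1 + y2]>
     violating both congruences), so F s - s x1 \in <[y1]> :&: <[y2]> = 0.
   The file develops lines and homotheties, rank-one operators (dyads),
   the linear maps "compose with p" and "evaluate at d", dimension counts
   for surjections and quotients by a line, and then the induction. *)

From HB Require Import structures.
From mathcomp Require Import all_boot all_order all_algebra.
From mathcomp Require Import zify.
Set Implicit Arguments. Unset Strict Implicit. Unset Printing Implicit Defensive.
Import GRing.Theory.
Local Open Scope ring_scope.

Section Lines.
Variables (K : fieldType) (V : vectType K).
Implicit Types (a b v y z : V).

Lemma line_cap0 a b v :
  b \notin <[a]>%VS -> v \in <[a]>%VS -> v \in <[b]>%VS -> v = 0.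
Proof.
move=> b_a /vlineP[k ->] /vlineP[l ekl]; rewrite ekl.
have [->|lnz] := eqVneq l 0; first by rewrite scale0r.
case/negP: b_a; apply/vlineP; exists (l^-1 * k).
by rewrite -scalerA ekl scalerA mulVf // scale1r.
Qed.

Lemma notin_line_sym a b : a != 0 -> b \notin <[a]>%VS -> a \notin <[b]>%VS.
Proof.
move=> anz; apply: contra => /vlineP[k eak].
have knz : k != 0 by apply: contraNneq anz => k0; rewrite eak k0 scale0r.
by apply/vlineP; exists k^-1; rewrite eak scalerA mulVf // scale1r.
Qed.

Lemma notin_lineD a b : b \notin <[a]>%VS -> a + b \notin <[a]>%VS.
Proof. by apply: contra => abP; rewrite -(addKr a b) memvD ?memvN ?memv_line. Qed.

Lemma exists_notin (L : {vspace V}) : (\dim L < \dim {:V})%N -> exists z, z \notin L.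
Proof.
move=> dimL; have /subvPn[z _ zL] : ~~ (fullv <= L)%VS.
  by apply: contraTN dimL => /dimvS; rewrite leqNgt.
by exists z.
Qed.

(* An additive map f sending every vector y into the line <[y]> is a
   homothety, provided dim V >= 2: the factors of two non-collinear
   vectors y, z must agree since f (y + z) also lies on <[y + z]>. *)
Section LocallyScalar.
Variable f : V -> V.
Hypotheses (f_add : {morph f : y z / y + z}) (f_line : forall y, f y \in <[y]>%VS).

Lemma scalar_agree y z (a b : K) :
  y \notin <[z]>%VS -> z != 0 -> f y = a *: y -> f z = b *: z -> a = b.
Proof.
move=> y_z znz fy fz; have /vlineP[d fyz] := f_line (y + z).
have ynz : y != 0 by apply: contraNneq y_z => ->; rewrite mem0v.
have e : (a - d) *: y = (d - b) *: z.
  have h : a *: y + b *: z = d *: y + d *: z by rewrite -fy -fz -f_add fyz scalerDr.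
  by rewrite !scalerBl; apply/eqP; rewrite subr_eq addrAC eq_sym subr_eq addrC h.
have dbz_y : (d - b) *: z \in <[y]>%VS by rewrite -e memvZ ?memv_line.
have /eqP := line_cap0 y_z (memvZ (d - b) (memv_line z)) dbz_y.
rewrite scaler_eq0 (negPf znz) orbF subr_eq0 => /eqP db.
by move/eqP: e; rewrite db subrr scale0r scaler_eq0 (negPf ynz) orbF subr_eq0 => /eqP.
Qed.

Lemma additive_scalar : (1 < \dim {:V})%N -> exists c, forall y, f y = c *: y.
Proof.
move=> dimV.
have f0 : f 0 = 0 by apply: (addrI (f 0)); rewrite -f_add !addr0.
have [e e0] : exists e : V, e \notin 0%VS by apply: exists_notin; rewrite dimv0 ltnW.
have enz : e != 0 by rewrite -memv0.
have [e' e'_e] : exists e', e' \notin <[e]>%VS by apply: exists_notin; rewrite dim_vline enz.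
have e'nz : e' != 0 by apply: contraNneq e'_e => ->; rewrite mem0v.
have /vlineP[c fe] := f_line e; have /vlineP[c' fe'] := f_line e'.
have c'c : c' = c := scalar_agree e'_e enz fe' fe.
exists c => y; have /vlineP[a fy] := f_line y.
have [->|ynz] := eqVneq y 0; first by rewrite f0 scaler0.
have [y_e|y_e] := boolP (y \in <[e]>%VS); last by rewrite fy (scalar_agree y_e enz fy fe).
have y_e' : y \notin <[e']>%VS.
  by apply: contraNN ynz => y_e'; rewrite (line_cap0 e'_e y_e y_e').
by rewrite fy (scalar_agree y_e' e'nz fy fe') c'c.
Qed.

End LocallyScalar.
End Lines.

Section Dyads.
Variables (K : fieldType) (U V : vectType K).

Definition dyad_fun (phi : {scalar U}) (y : V) (u : U) : V := phi u *: y.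

Fact dyad_fun_linear phi y : linear (dyad_fun phi y).
Proof. by move=> a u v; rewrite /dyad_fun linearP scalerDl scalerA. Qed.

HB.instance Definition _ phi y :=
  GRing.isLinear.Build K U V *:%R (dyad_fun phi y) (dyad_fun_linear phi y).

Definition dyad (phi : {scalar U}) (y : V) : 'Hom(U, V) := linfun (dyad_fun phi y).

Lemma dyadE phi y u : dyad phi y u = phi u *: y.
Proof. by rewrite lfunE. Qed.

Lemma dyad0 phi : dyad phi 0 = 0.
Proof. by apply/lfunP => u; rewrite dyadE scaler0 zero_lfunE. Qed.

Lemma dyadD phi : {morph dyad phi : y z / y + z}.
Proof. by move=> y z; apply/lfunP => u; rewrite add_lfunE !dyadE scalerDr. Qed.

Lemma dyad_range phi y : (limg (dyad phi y) <= <[y]>)%VS.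
Proof. by apply/subvP => v /memv_imgP[u _ ->]; rewrite dyadE memvZ ?memv_line. Qed.

Lemma dyad_expand_dom (s : 'Hom(U, V)) (E := vbasis (fullv : {vspace U})) :
  s = \sum_i dyad (coord E i) (s E`_i).
Proof.
apply/lfunP => u; rewrite sum_lfunE {1}(coord_vbasis (memvf u)) linear_sum.
by apply: eq_bigr => i _; rewrite dyadE linearZ.
Qed.

Lemma dyad_expand_cod (s : 'Hom(U, V)) (X := vbasis (fullv : {vspace V})) :
  s = \sum_i dyad (coord X i \o s) X`_i.
Proof.
apply/lfunP => u; rewrite sum_lfunE {1}(coord_vbasis (memvf (s u))).
by apply: eq_bigr => i _; rewrite dyadE.
Qed.

Lemma dyad_through (d : U) (v : V) :
  d != 0 -> exists2 t : 'Hom(U, V), t d = v & (limg t <= <[v]>)%VS.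
Proof.
move=> dnz; pose E := vbasis (fullv : {vspace U}).
have /existsP[i ci] : [exists i, coord E i d != 0].
  apply: contraNT dnz => /existsPn coord0.
  rewrite (coord_vbasis (memvf d)) big1 // => i _.
  by rewrite (eqP (negbNE (coord0 i))) scale0r.
exists (dyad (coord E i) ((coord E i d)^-1 *: v)).
  by rewrite dyadE scalerA mulfV // scale1r.
by apply: subv_trans (dyad_range _ _) _; rewrite -memvE memvZ ?memv_line.
Qed.

Lemma dyad_outside (S : {vspace 'Hom(U, V)}) :
  S != fullv -> exists phi y, dyad phi y \notin S.
Proof.
move=> Snfull; have /subvPn[s _ sS] : ~~ (fullv <= S)%VS.
  by apply: contra Snfull => fS; rewrite eqEsubv fS subvf.
pose X := vbasis (fullv : {vspace V}).
have /existsP[i iS] : [exists i, dyad (coord X i \o s) X`_i \notin S].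
  apply: contraNT sS => /existsPn allS; rewrite (dyad_expand_cod s).
  by apply: memv_suml => i _; apply: negbNE (allS i).
by exists (coord X i \o s), X`_i.
Qed.

Lemma dyad_outside_noncollinear (S : {vspace 'Hom(U, V)}) phi y z :
  dyad phi y \notin S -> z \notin <[y]>%VS ->
  exists2 y', y' \notin <[y]>%VS & dyad phi y' \notin S.
Proof.
move=> yS z_y; have [zS|zS] := boolP (dyad phi z \in S); last by exists z.
exists (y + z); first exact: notin_lineD.
by apply: contra yS => yzS; rewrite -(addrK (dyad phi z) (dyad phi y)) -dyadD memvB.
Qed.

End Dyads.

Section OperatorMaps.
Variables (K : fieldType) (U V V' : vectType K).

Definition postcomp_fun (p : 'Hom(V, V')) (s : 'Hom(U, V)) : 'Hom(U, V') := (p \o s)%VF.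

Fact postcomp_fun_linear p : linear (postcomp_fun p).
Proof. by move=> a s t; rewrite /postcomp_fun comp_lfunDr comp_lfunZr. Qed.

HB.instance Definition _ p :=
  GRing.isLinear.Build K 'Hom(U, V) 'Hom(U, V') *:%R (postcomp_fun p) (postcomp_fun_linear p).

Definition postcomp p : 'Hom('Hom(U, V), 'Hom(U, V')) := linfun (postcomp_fun p).

Lemma postcompE p s u : postcomp p s u = p (s u).
Proof. by rewrite lfunE comp_lfunE. Qed.

Lemma limg_postcomp p : limg p = fullv -> limg (postcomp p) = fullv.
Proof.
move=> p_onto; apply/vspaceP => t; rewrite memvf; apply/memv_imgP.
exists (p^-1 \o t)%VF; rewrite ?memvf //; apply/lfunP => u.
by rewrite postcompE comp_lfunE limg_lfunVK // p_onto memvf.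
Qed.

Definition eval_fun (d : U) (s : 'Hom(U, V)) : V := s d.

Fact eval_fun_linear d : linear (eval_fun d).
Proof. by move=> a s t; rewrite /eval_fun add_lfunE scale_lfunE. Qed.

HB.instance Definition _ d :=
  GRing.isLinear.Build K 'Hom(U, V) V *:%R (eval_fun d) (eval_fun_linear d).

Definition eval_at d : 'Hom('Hom(U, V), V) := linfun (eval_fun d).

Lemma eval_atE d s : eval_at d s = s d.
Proof. by rewrite lfunE. Qed.

Lemma limg_eval_at d : d != 0 -> limg (eval_at d) = fullv.
Proof.
move=> dnz; apply/vspaceP => v; rewrite memvf; apply/memv_imgP.
by have [t td _] := dyad_through v dnz; exists t; rewrite ?memvf ?eval_atE.
Qed.

End OperatorMaps.

Lemma codimvE (K : fieldType) (W : vectType K) (S : {vspace W}) :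
  (codimv S + \dim S)%N = \dim {:W}.
Proof. by rewrite /codimv subnK ?dimvS ?subvf. Qed.

Section Dimensions.
Variables (K : fieldType) (W W' : vectType K).
Variables (f : 'Hom(W, W')) (f_onto : limg f = fullv).

Lemma codimv_img_lt (S : {vspace W}) :
  ~~ (lker f <= S)%VS -> (codimv (f @: S) < codimv S)%N.
Proof.
move=> kerS; have rank_S := limg_ker_dim f S.
have rank_W := limg_ker_dim f fullv; rewrite capfv f_onto in rank_W.
have ker_lt : (\dim (S :&: lker f) < \dim (lker f))%N.
  rewrite (ltn_leqif (dimv_leqif_sup (capvSr _ _))).
  by apply: contra kerS => kerSK; apply: subv_trans kerSK (capvSl _ _).
have := codimvE (f @: S); have := codimvE S; lia.
Qed.

Lemma dimv_preim (P : {vspace W'}) :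
  \dim (f @^-1: P) = (\dim (lker f) + \dim P)%N.
Proof.
have ker_preim : (lker f <= f @^-1: P)%VS by rewrite -lpreim0 lpreimS ?sub0v.
have := limg_ker_dim f (f @^-1: P)%VS.
by rewrite lpreimK ?f_onto ?subvf // (capv_idPr ker_preim) => <-.
Qed.

Lemma subv_preim_eq (S : {vspace W}) (P : {vspace W'}) :
  (S <= f @^-1: P)%VS -> (codimv S + \dim P <= \dim {:W'})%N -> S = (f @^-1: P)%VS.
Proof.
move=> SP codimS; apply/eqP; rewrite eqEdim SP dimv_preim /=.
have := limg_ker_dim f fullv; rewrite capfv f_onto.
have := codimvE S; lia.
Qed.

End Dimensions.

Lemma exists_lift (K : fieldType) (W W' : vectType K) (f : 'Hom(W, W'))
    (S : {vspace W}) :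
  exists2 g : 'Hom(W', W), (limg g <= S)%VS & {in (f @: S)%VS, forall t, f (g t) = t}.
Proof.
exists (projv S \o (f \o projv S)^-1)%VF.
  by apply/subvP => w /memv_imgP[t _ ->]; rewrite comp_lfunE memv_proj.
move=> t /memv_imgP[s sS ->].
have fs_img : f s \in limg (f \o projv S)%VF.
  by apply/memv_imgP; exists s; rewrite ?memvf // comp_lfunE projv_id.
by have := limg_lfunVK fs_img; rewrite !comp_lfunE.
Qed.

Section QuotientByLine.
Variables (K : fieldType) (V : vectType K) (y : V).

Lemma exists_quotient_line :
  exists V' : vectType K, exists p : 'Hom(V, V'), lker p = <[y]>%VS /\ limg p = fullv.
Proof.
pose L := <[y]>%VS; pose W := (L^C)%VS.
exists (subvs_of W), (linfun (vsproj W) \o (\1 - projv L))%VF.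
have pE v : (linfun (vsproj W) \o (\1 - projv L))%VF v = vsproj W (v - projv L v).
  by rewrite comp_lfunE lfunE /= add_lfunE opp_lfunE id_lfunE.
split; apply/vspaceP => v.
- rewrite memv_ker pE; apply/eqP/idP => [pv0|vL]; last by rewrite projv_id // subrr linear0.
  have : v - projv L v = 0 by rewrite -(vsprojK (memv_projC L v)) pv0.
  by move/subr0_eq => ->; apply: memv_proj.
- rewrite memvf; apply/memv_imgP; exists (vsval v); rewrite ?memvf // pE.
  have /eqP-> : projv L (vsval v) == 0 by rewrite -memv_ker lker_proj subvsP.
  by rewrite subr0 vsvalK.
Qed.

Lemma dim_quotient_line (V' : vectType K) (p : 'Hom(V, V')) :
  lker p = <[y]>%VS -> limg p = fullv -> (\dim {:V'} + (y != 0%R) = \dim {:V})%N.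
Proof.
move=> ker_p p_onto; have := limg_ker_dim p fullv.
by rewrite capfv ker_p p_onto dim_vline addnC.
Qed.

End QuotientByLine.

Section Locality.
Variables (K : fieldType) (U : vectType K).

(* The theorem for operators with values in V, for a map F defined on all
   of L(U,V) but constrained only on S. *)
Definition locality (V : vectType K) : Prop :=
  forall (S : {vspace 'Hom(U, V)}) (F : 'Hom(U, V) -> V),
  (codimv S + 2 <= \dim {:V})%N ->
  {in S &, {morph F : s t / s + t}} ->
  {in S, forall s, F s \in limg s} ->
  exists x, {in S, forall s, F s = s x}.

Lemma codimv_postcomp (V V' : vectType K) (p : 'Hom(V, V')) (y : V)
    (S : {vspace 'Hom(U, V)}) (r : 'Hom(U, V)) :
  lker p = <[y]>%VS -> limg p = fullv -> r \notin S -> (limg r <= <[y]>)%VS ->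
  (codimv S + 2 <= \dim {:V})%N -> (codimv (postcomp U p @: S) + 2 <= \dim {:V'})%N.
Proof.
move=> ker_p p_onto rS ry codimS.
have r_ker : r \in lker (postcomp U p).
  rewrite memv_ker; apply/eqP/lfunP => u; rewrite postcompE zero_lfunE.
  by apply/eqP; rewrite -memv_ker ker_p (subvP ry) ?memv_img ?memvf.
have kerS : ~~ (lker (postcomp U p) <= S)%VS.
  by apply: contra rS => /subvP; apply.
have dimV' : (\dim {:V} <= \dim {:V'} + 1)%N.
  by rewrite -(dim_quotient_line ker_p p_onto) leq_add2l leq_b1.
(* codim of the image + 1 <= codim S <= dim V - 2 <= dim V' - 1 *)
have codim_lt := codimv_img_lt (limg_postcomp U p_onto) kerS.
rewrite -(leq_add2r 1) -addnA (leq_trans _ (leq_trans codimS dimV')) //.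
by rewrite [(2 + 1)%N]addnC addnA leq_add2r addn1.
Qed.

Section OneTarget.
Variables (V : vectType K) (S : {vspace 'Hom(U, V)}) (F : 'Hom(U, V) -> V).
Hypotheses (F_add : {in S &, {morph F : s t / s + t}})
           (F_rc : {in S, forall s, F s \in limg s}).

Lemma F_sub : {in S &, {morph F : s t / s - t}}.
Proof.
move=> s t sS tS; apply/eqP; rewrite eq_sym subr_eq -F_add ?memvB //.
by rewrite subrK.
Qed.

(* Base case: on the whole of L(U,V), F is a homothety on each family of
   dyads with a fixed coordinate form, and linearity in s concludes. *)
Lemma local_full :
  S = fullv -> (1 < \dim {:V})%N -> exists x, {in S, forall s, F s = s x}.
Proof.
move=> Sfull dimV; pose E := vbasis (fullv : {vspace U}).
have F_add' : {morph F : s t / s + t} by move=> s t; rewrite F_add ?Sfull ?memvf.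
have F0 : F 0 = 0 by apply: (addrI (F 0)); rewrite -F_add' !addr0.
have coef i : exists c, forall y, F (dyad (coord E i) y) = c *: y.
  apply: additive_scalar dimV => [y z|y]; first by rewrite dyadD F_add'.
  by apply: (subvP (dyad_range _ y)); apply: F_rc; rewrite Sfull memvf.
have [c Fc] := fin_all_exists coef.
exists (\sum_i c i *: E`_i) => s _.
rewrite {1}(dyad_expand_dom s) (big_morph F F_add' F0) linear_sum.
by apply: eq_bigr => i _; rewrite Fc linearZ.
Qed.

Lemma F_postcomp0 (V' : vectType K) (p : 'Hom(V, V')) s :
  s \in S -> postcomp U p s = 0 -> p (F s) = 0.
Proof.
move=> sS ps0; have /memv_imgP[u _ ->] := F_rc sS.
by rewrite -postcompE ps0 zero_lfunE.
Qed.

(* Induction step: F descends to the image of S in L(U, V/<[y]>), whose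
   locality gives a point x with F s = s x modulo <[y]>. *)
Lemma local_mod_line (V' : vectType K) (p : 'Hom(V, V')) (y : V) (r : 'Hom(U, V)) :
  lker p = <[y]>%VS -> limg p = fullv -> locality V' ->
  (codimv S + 2 <= \dim {:V})%N -> r \notin S -> (limg r <= <[y]>)%VS ->
  exists x, {in S, forall s, F s - s x \in <[y]>%VS}.
Proof.
move=> ker_p p_onto IH codimS rS ry; pose Phi := postcomp U p.
have [g gS g_lift] := exists_lift Phi S.
have g_in t : g t \in S by apply: (subvP gS); rewrite memv_img ?memvf.
have [x Fx] : exists x, {in (Phi @: S)%VS, forall t, p (F (g t)) = t x}.
  apply: IH; first exact: codimv_postcomp ker_p p_onto rS ry codimS.
    move=> t1 t2 _ _ /=; have gD : g (t1 + t2) = g t1 + g t2 by exact: linearD.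
    by rewrite gD F_add // linearD.
  move=> t tS; have /memv_imgP[u _ ->] := F_rc (g_in t).
  by rewrite -postcompE g_lift // memv_img ?memvf.
exists x => s sS; rewrite -ker_p memv_ker.
have PhisS : Phi s \in (Phi @: S)%VS by rewrite memv_img.
have dS : s - g (Phi s) \in S by rewrite memvB.
have Phid : Phi (s - g (Phi s)) = 0 by rewrite linearB /= g_lift // subrr.
have Fs : F s = F (g (Phi s)) + F (s - g (Phi s)) by rewrite F_sub // addrC subrK.
by rewrite linearB Fs linearD /= (F_postcomp0 dS Phid) addr0 Fx // postcompE subrr.
Qed.

(* Two congruences modulo non-collinear lines <[y1]>, <[y2]> force the
   points to agree: otherwise S would contain every s with
   s (x1 - x2) \in <[y1]> + <[y2]>, e.g. an operator of range <[y1 + y2]>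
   for which both congruences fail. *)
Lemma congruent_points_eq (y1 y2 : V) (x1 x2 : U) :
  (codimv S + 2 <= \dim {:V})%N -> y1 != 0 -> y2 \notin <[y1]>%VS ->
  {in S, forall s, F s - s x1 \in <[y1]>%VS} ->
  {in S, forall s, F s - s x2 \in <[y2]>%VS} -> x1 = x2.
Proof.
move=> codimS y1nz y2_y1 h1 h2; apply/eqP; rewrite -subr_eq0; apply/negP => /negP dnz.
pose d := x1 - x2; pose M := (eval_at V d @^-1: (<[y1]> + <[y2]>))%VS.
have sd (s : 'Hom(U, V)) : s d = (F s - s x2) - (F s - s x1).
  by rewrite linearB /= opprB [RHS]addrC addrA subrK.
have SM : (S <= M)%VS.
  apply/subvP => s sS; rewrite -memv_preim eval_atE sd addvC.
  by rewrite memv_add ?memvN ?h1 ?h2.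
have dimP : (\dim (<[y1]> + <[y2]>) <= 2)%N.
  apply: leq_trans (dimv_add_leqif _ _).1 _; rewrite !dim_vline.
  exact: leq_add (leq_b1 _) (leq_b1 _).
have SM_eq : S = M.
  apply: (subv_preim_eq (limg_eval_at V dnz) SM).
  by rewrite (leq_trans _ codimS) ?leq_add2l.
have y12_y1 : y1 + y2 \notin <[y1]>%VS := notin_lineD y2_y1.
have y12nz : y1 + y2 != 0 by apply: contraNneq y12_y1 => ->; rewrite mem0v.
have y2nz : y2 != 0 by apply: contraNneq y2_y1 => ->; rewrite mem0v.
have y1_y12 : y1 \notin <[y1 + y2]>%VS := notin_line_sym y1nz y12_y1.
have y2_y12 : y2 \notin <[y1 + y2]>%VS.
  by rewrite notin_line_sym // addrC notin_lineD // notin_line_sym.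
have [t td t_y12] := dyad_through (y1 + y2) dnz.
have tS : t \in S by rewrite SM_eq -memv_preim eval_atE td memv_add ?memv_line.
have t_line x : F t - t x \in <[y1 + y2]>%VS.
  by rewrite memvB ?(subvP t_y12) ?F_rc ?memv_img ?memvf.
have e1 := line_cap0 y1_y12 (t_line x1) (h1 _ tS).
have e2 := line_cap0 y2_y12 (t_line x2) (h2 _ tS).
by move: y12nz; rewrite -td sd e1 e2 subrr eqxx.
Qed.

End OneTarget.

Lemma locality_by_dim n (V : vectType K) : \dim {:V} = n -> locality V.
Proof.
elim/ltn_ind: n V => n IH V dimV S F codimS F_add F_rc.
have dimV2 : (1 < \dim {:V})%N by move: codimS; lia.
have [Sfull|Snfull] := eqVneq S fullv; first exact: local_full.
have mod_line y r : y != 0 -> r \notin S -> (limg r <= <[y]>)%VS ->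
    exists x, {in S, forall s, F s - s x \in <[y]>%VS}.
  move=> ynz rS ry; have [V' [p [ker_p p_onto]]] := exists_quotient_line y.
  apply: (local_mod_line F_add F_rc ker_p p_onto _ codimS rS ry).
  apply: IH erefl; rewrite -dimV -(dim_quotient_line ker_p p_onto) ynz.
  by rewrite addn1.
have [phi [y1 r1S]] := dyad_outside Snfull.
have y1nz : y1 != 0.
  by apply: contraNneq r1S => ->; rewrite dyad0 mem0v.
have [z z_y1] : exists z, z \notin <[y1]>%VS.
  by apply: exists_notin; rewrite dim_vline y1nz.
have [y2 y2_y1 r2S] := dyad_outside_noncollinear r1S z_y1.
have y2nz : y2 != 0 by apply: contraNneq y2_y1 => ->; rewrite mem0v.
have [x1 h1] := mod_line y1 _ y1nz r1S (dyad_range _ _).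
have [x2 h2] := mod_line y2 _ y2nz r2S (dyad_range _ _).
exists x1 => s sS; apply/eqP; rewrite -subr_eq0; apply/eqP.
apply: (line_cap0 y2_y1 (h1 _ sS)).
by rewrite (congruent_points_eq F_rc codimS y1nz y2_y1 h1 h2) h2.
Qed.

End Locality.

Theorem theorem1p5 (K : fieldType) (U V : vectType K)
  (S : {vspace 'Hom(U, V)})
  (hcodim : (codimv S + 2 <= \dim (fullv : {vspace V}))%N)
  (F : subvs_of S -> V)
  (F_add : forall s t : subvs_of S, F (s + t) = F s + F t)
  (F_rc : forall s : subvs_of S, F s \in limg (vsval s)) :
  exists x : U, forall s : subvs_of S, F s = (vsval s) x.
Proof.
pose G s := F (vsproj S s).
have G_add : {in S &, {morph G : s t / s + t}}.
  by move=> s t _ _; rewrite /G linearD F_add.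
have G_rc : {in S, forall s, G s \in limg s}.
  by move=> s sS; have := F_rc (vsproj S s); rewrite vsprojK.
have [x Gx] := locality_by_dim erefl hcodim G_add G_rc.
by exists x => s; have := Gx _ (subvsP s); rewrite /G vsvalK.
Qed.
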